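(* Let $X$ be a Banach space. If there exists a Banach space $Y\neq\{0\}$ such that the pair $(X,Y)$ has the uniform sBPBp, then $X$ is uniformly convex.
   Context: All Banach spaces are over $\mathbb{K}=\mathbb{R}$ or $\mathbb{C}$. $S_X$ denotes the unit sphere of $X$ and $\mathcal{L}(X,Y)$ the space of bounded linear operators from $X$ to $Y$ with the operator norm. A pair of Banach spaces $(X,Y)$ has the uniform strong Bishop–Phelps–Bollobás property (uniform sBPBp) if for every $\varepsilon>0$ there exists $\eta(\varepsilon)>0$ such that whenever $T\in\mathcal{L}(X,Y)$ with $\|T\|=1$ and $x_0\in S_X$ satisfy $\|T(x_0)\|>1-\eta(\varepsilon)$, there exists $x_1\in S_X$ with $\|T(x_1)\|=1$ and $\|x_1-x_0\|<\varepsilon$. *)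

From Stdlib Require Import Reals.
Open Scope R_scope.

Record Cplx := mkCplx { Cre : R; Cim : R }.
Definition Cplx_add (a b : Cplx) := mkCplx (Cre a + Cre b) (Cim a + Cim b).
Definition Cplx_mul (a b : Cplx) :=
  mkCplx (Cre a * Cre b - Cim a * Cim b) (Cre a * Cim b + Cim a * Cre b).
Definition Cplx_opp (a : Cplx) := mkCplx (- Cre a) (- Cim a).
Definition Cplx_0 := mkCplx 0 0.
Definition Cplx_1 := mkCplx 1 0.
Definition Cplx_abs (a : Cplx) := sqrt (Cre a * Cre a + Cim a * Cim a).

Inductive Kind := RealK | ComplexK.

Definition K (k : Kind) : Type :=
  match k with RealK => R | ComplexK => Cplx end.

Definition Kadd (k : Kind) : K k -> K k -> K k :=
  match k return K k -> K k -> K k with RealK => Rplus | ComplexK => Cplx_add end.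
Definition Kmul (k : Kind) : K k -> K k -> K k :=
  match k return K k -> K k -> K k with RealK => Rmult | ComplexK => Cplx_mul end.
Definition K1 (k : Kind) : K k :=
  match k return K k with RealK => 1 | ComplexK => Cplx_1 end.
Definition Kabs (k : Kind) : K k -> R :=
  match k return K k -> R with RealK => Rabs | ComplexK => Cplx_abs end.

Record NormedSpace (k : Kind) := {
  carrier :> Type;
  vadd : carrier -> carrier -> carrier;
  vzero : carrier;
  vopp : carrier -> carrier;
  vscale : K k -> carrier -> carrier;
  norm : carrier -> R;
  vadd_assoc : forall x y z, vadd x (vadd y z) = vadd (vadd x y) z;
  vadd_comm : forall x y, vadd x y = vadd y x;
  vadd_0 : forall x, vadd x vzero = x;
  vadd_opp : forall x, vadd x (vopp x) = vzero;
  vscale_1 : forall x, vscale (K1 k) x = x;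
  vscale_assoc : forall a b x, vscale a (vscale b x) = vscale (Kmul k a b) x;
  vscale_addv : forall a x y, vscale a (vadd x y) = vadd (vscale a x) (vscale a y);
  vscale_adds : forall a b x, vscale (Kadd k a b) x = vadd (vscale a x) (vscale b x);
  norm_eq0 : forall x, norm x = 0 <-> x = vzero;
  norm_scale : forall a x, norm (vscale a x) = Kabs k a * norm x;
  norm_triangle : forall x y, norm (vadd x y) <= norm x + norm y
}.

Arguments vadd {k} _ _ _.
Arguments vzero {k} _.
Arguments vopp {k} _ _.
Arguments vscale {k} _ _ _.
Arguments norm {k} _ _.

Definition vsub {k} (X : NormedSpace k) (x y : X) : X := vadd X x (vopp X y).

Definition complete {k} (X : NormedSpace k) : Prop :=
  forall u : nat -> X,
    (forall eps, 0 < eps -> exists N, forall m n, (N <= m)%nat -> (N <= n)%nat ->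
        norm X (vsub X (u m) (u n)) < eps) ->
    exists l : X, forall eps, 0 < eps -> exists N, forall n, (N <= n)%nat ->
        norm X (vsub X (u n) l) < eps.

Record BanachSpace (k : Kind) := {
  bspace :> NormedSpace k;
  bcomplete : complete bspace
}.

Definition is_linear {k} (X Y : NormedSpace k) (T : X -> Y) : Prop :=
  (forall x y, T (vadd X x y) = vadd Y (T x) (T y)) /\
  (forall a x, T (vscale X a x) = vscale Y a (T x)).

Definition is_bounded {k} (X Y : NormedSpace k) (T : X -> Y) : Prop :=
  exists M, forall x, norm Y (T x) <= M * norm X x.

Definition is_bounded_linear {k} (X Y : NormedSpace k) (T : X -> Y) : Prop :=
  is_linear X Y T /\ is_bounded X Y T.

Definition opnorm_eq {k} (X Y : NormedSpace k) (T : X -> Y) (c : R) : Prop :=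
  is_lub (fun r => exists x : X, norm X x <= 1 /\ r = norm Y (T x)) c.

Definition uniform_sBPBp {k} (X Y : NormedSpace k) : Prop :=
  forall eps, 0 < eps -> exists eta, 0 < eta /\
    forall (T : X -> Y) (x0 : X),
      is_bounded_linear X Y T -> opnorm_eq X Y T 1 ->
      norm X x0 = 1 -> norm Y (T x0) > 1 - eta ->
      exists x1 : X, norm X x1 = 1 /\ norm Y (T x1) = 1 /\
                     norm X (vsub X x1 x0) < eps.

Definition uniformly_convex {k} (X : NormedSpace k) : Prop :=
  forall eps, 0 < eps -> exists delta, 0 < delta /\
    forall x y : X, norm X x = 1 -> norm X y = 1 ->
      norm X (vsub X x y) >= eps -> norm X (vadd X x y) / 2 <= 1 - delta.

From Stdlib Require Import Reals Lra Psatz.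
From mathcomp Require boolp classical_sets.
Open Scope R_scope.

(* If [X] is not uniformly convex there are unit vectors [x], [y] with
   [‖x - y‖ >= eps] and [‖x + y‖] close to 2.  Take Hahn–Banach functionals [f]
   norming [x + y] and [h] norming [x - y], and perturb them to [g = f + t h].
   Since [Re f(y)] is close to 1, [y] almost attains [‖g‖], so the sBPBp applied
   to the rank-one operators [u ↦ (g u / ‖g‖) y1] gives a point [w] close to [y]
   at which [g] attains its norm.  At such a [w] the [h]-part of [g(w)] is
   governed by [Re h(y)], whence [‖g‖ <= 1 + t (Re h(y) + small)]; but
   [‖g‖ >= Re g(x) ≈ 1 + t (Re h(y) + ‖x - y‖)], so [‖x - y‖] is small. *)

Definition toC (k : Kind) : K k -> Cplx :=
  match k return K k -> Cplx with RealK => fun r => mkCplx r 0 | ComplexK => fun z => z end.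
Definition KofR (k : Kind) (r : R) : K k :=
  match k return K k with RealK => r | ComplexK => mkCplx r 0 end.
Definition Kre (k : Kind) (a : K k) : R := Cre (toC k a).
Definition Kim (k : Kind) (a : K k) : R := Cim (toC k a).

Lemma Cplx_ext (a b : Cplx) : Cre a = Cre b -> Cim a = Cim b -> a = b.
Proof. destruct a, b; simpl; intros; subst; reflexivity. Qed.

Lemma toC_inj k (a b : K k) : toC k a = toC k b -> a = b.
Proof. destruct k; simpl; intro H; [injection H; auto | exact H]. Qed.

Lemma toC_add k a b : toC k (Kadd k a b) = Cplx_add (toC k a) (toC k b).
Proof. destruct k; simpl; apply Cplx_ext; simpl; ring. Qed.

Lemma toC_mul k a b : toC k (Kmul k a b) = Cplx_mul (toC k a) (toC k b).
Proof. destruct k; simpl; apply Cplx_ext; simpl; ring. Qed.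

Lemma toC_KofR k r : toC k (KofR k r) = mkCplx r 0.
Proof. destruct k; reflexivity. Qed.

Lemma toC_K1 k : toC k (K1 k) = mkCplx 1 0.
Proof. destruct k; reflexivity. Qed.

Definition norm2 (x y : R) : R := sqrt (x * x + y * y).

Lemma norm2_ge0 x y : 0 <= norm2 x y.
Proof. apply sqrt_pos. Qed.

Lemma norm2_sq x y : norm2 x y * norm2 x y = x * x + y * y.
Proof. apply sqrt_sqrt. nra. Qed.

Lemma Rle_of_sq a b : 0 <= b -> a * a <= b * b -> a <= b.
Proof. intros Hb H. destruct (Rle_or_lt a b) as [|Hl]; auto. nra. Qed.

Lemma norm2_le x y s : 0 <= s -> x * x + y * y <= s * s -> norm2 x y <= s.
Proof.
intros Hs H. rewrite <- (sqrt_square s Hs). apply sqrt_le_1_alt. exact H.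
Qed.

Lemma norm2_dot_le x1 y1 x2 y2 : x1 * x2 + y1 * y2 <= norm2 x1 y1 * norm2 x2 y2.
Proof.
pose proof (norm2_sq x1 y1). pose proof (norm2_sq x2 y2).
pose proof (norm2_ge0 x1 y1). pose proof (norm2_ge0 x2 y2).
apply Rle_of_sq; [nra|].
replace (norm2 x1 y1 * norm2 x2 y2 * (norm2 x1 y1 * norm2 x2 y2)) with
  ((norm2 x1 y1 * norm2 x1 y1) * (norm2 x2 y2 * norm2 x2 y2)) by ring.
pose proof (Rle_0_sqr (x1 * y2 - y1 * x2)). unfold Rsqr in *. nra.
Qed.

Lemma norm2_triangle x1 y1 x2 y2 : norm2 (x1 + x2) (y1 + y2) <= norm2 x1 y1 + norm2 x2 y2.
Proof.
pose proof (norm2_dot_le x1 y1 x2 y2).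
pose proof (norm2_sq x1 y1). pose proof (norm2_sq x2 y2).
pose proof (norm2_ge0 x1 y1). pose proof (norm2_ge0 x2 y2).
apply norm2_le; nra.
Qed.

Lemma norm2_ge_fst x y : x <= norm2 x y.
Proof. pose proof (norm2_sq x y). pose proof (norm2_ge0 x y). apply Rle_of_sq; nra. Qed.

Lemma norm2_ge_abs_fst x y : Rabs x <= norm2 x y.
Proof.
pose proof (norm2_sq x y). pose proof (norm2_ge0 x y).
apply Rle_of_sq; auto. rewrite <- Rabs_mult, Rabs_right by nra. nra.
Qed.

Lemma norm2_mul x1 y1 x2 y2 :
  norm2 (x1 * x2 - y1 * y2) (x1 * y2 + y1 * x2) = norm2 x1 y1 * norm2 x2 y2.
Proof. unfold norm2. rewrite <- sqrt_mult by nra. f_equal. ring. Qed.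

Lemma Kabs_norm2 k a : Kabs k a = norm2 (Kre k a) (Kim k a).
Proof.
destruct k; [|reflexivity]. unfold Kre, Kim, norm2; simpl.
replace (a * a + 0 * 0) with (Rsqr a) by (unfold Rsqr; ring).
rewrite sqrt_Rsqr_abs. reflexivity.
Qed.

Lemma Kmul_comm k a b : Kmul k a b = Kmul k b a.
Proof. apply toC_inj. rewrite !toC_mul. apply Cplx_ext; simpl; ring. Qed.

Lemma Kmul_assoc k a b c : Kmul k a (Kmul k b c) = Kmul k (Kmul k a b) c.
Proof. apply toC_inj. rewrite !toC_mul. apply Cplx_ext; simpl; ring. Qed.

Lemma Kmul_addr k a b c : Kmul k a (Kadd k b c) = Kadd k (Kmul k a b) (Kmul k a c).
Proof. apply toC_inj. rewrite toC_mul, !toC_add, !toC_mul. apply Cplx_ext; simpl; ring. Qed.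

Lemma KofR_add k r s : Kadd k (KofR k r) (KofR k s) = KofR k (r + s).
Proof. apply toC_inj. rewrite toC_add, !toC_KofR. apply Cplx_ext; simpl; ring. Qed.

Lemma KofR_mul k r s : Kmul k (KofR k r) (KofR k s) = KofR k (r * s).
Proof. apply toC_inj. rewrite toC_mul, !toC_KofR. apply Cplx_ext; simpl; ring. Qed.

Lemma KofR_1 k : KofR k 1 = K1 k.
Proof. apply toC_inj. rewrite toC_KofR, toC_K1. reflexivity. Qed.

Lemma Kre_add k a b : Kre k (Kadd k a b) = Kre k a + Kre k b.
Proof. unfold Kre. rewrite toC_add. reflexivity. Qed.

Lemma Kim_add k a b : Kim k (Kadd k a b) = Kim k a + Kim k b.
Proof. unfold Kim. rewrite toC_add. reflexivity. Qed.

Lemma Kre_mulR k r a : Kre k (Kmul k (KofR k r) a) = r * Kre k a.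
Proof. unfold Kre. rewrite toC_mul, toC_KofR. simpl. ring. Qed.

Lemma Kim_mulR k r a : Kim k (Kmul k (KofR k r) a) = r * Kim k a.
Proof. unfold Kim. rewrite toC_mul, toC_KofR. simpl. ring. Qed.

Lemma Kabs_KofR k r : Kabs k (KofR k r) = Rabs r.
Proof.
rewrite Kabs_norm2. unfold Kre, Kim. rewrite toC_KofR. simpl.
unfold norm2. replace (r * r + 0 * 0) with (Rsqr r) by (unfold Rsqr; ring).
apply sqrt_Rsqr_abs.
Qed.

Lemma Kabs_mul k a b : Kabs k (Kmul k a b) = Kabs k a * Kabs k b.
Proof. rewrite !Kabs_norm2. unfold Kre, Kim. rewrite toC_mul. apply norm2_mul. Qed.

Lemma Kabs_triangle k a b : Kabs k (Kadd k a b) <= Kabs k a + Kabs k b.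
Proof. rewrite !Kabs_norm2, Kre_add, Kim_add. apply norm2_triangle. Qed.

Lemma Kre_le_Kabs k a : Kre k a <= Kabs k a.
Proof. rewrite Kabs_norm2. apply norm2_ge_fst. Qed.

Lemma Rabs_Kre_le_Kabs k a : Rabs (Kre k a) <= Kabs k a.
Proof. rewrite Kabs_norm2. apply norm2_ge_abs_fst. Qed.

Arguments vadd_assoc {k} _ _ _ _.
Arguments vadd_comm {k} _ _ _.
Arguments vadd_0 {k} _ _.
Arguments vadd_opp {k} _ _.
Arguments vscale_1 {k} _ _.
Arguments vscale_assoc {k} _ _ _ _.
Arguments vscale_addv {k} _ _ _ _.
Arguments vscale_adds {k} _ _ _ _.
Arguments norm_eq0 {k} _ _.
Arguments norm_scale {k} _ _ _.
Arguments norm_triangle {k} _ _ _.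

Section VectorAlgebra.
Context {k : Kind} (X : NormedSpace k).

Definition rscale (r : R) (v : X) : X := vscale X (KofR k r) v.

Lemma vadd_0l (x : X) : vadd X (vzero X) x = x.
Proof. rewrite vadd_comm. apply vadd_0. Qed.

Lemma vadd_cancel (x y z : X) : vadd X x y = vadd X x z -> y = z.
Proof.
intro H.
assert (E : vadd X (vopp X x) (vadd X x y) = vadd X (vopp X x) (vadd X x z))
  by (rewrite H; reflexivity).
rewrite !vadd_assoc, (vadd_comm X (vopp X x) x), vadd_opp, !vadd_0l in E. exact E.
Qed.

Lemma vadd_cancel_r (x y z : X) : vadd X y x = vadd X z x -> y = z.
Proof. rewrite (vadd_comm X y), (vadd_comm X z). apply vadd_cancel. Qed.

Lemma vadd_swap (p q r s : X) :
  vadd X (vadd X p q) (vadd X r s) = vadd X (vadd X p r) (vadd X q s).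
Proof. rewrite !vadd_assoc. f_equal. rewrite <- !vadd_assoc. f_equal. apply vadd_comm. Qed.

Lemma rscale_adds a b (v : X) : vadd X (rscale a v) (rscale b v) = rscale (a + b) v.
Proof. unfold rscale. rewrite <- vscale_adds, KofR_add. reflexivity. Qed.

Lemma rscale_addv a (u v : X) : rscale a (vadd X u v) = vadd X (rscale a u) (rscale a v).
Proof. apply vscale_addv. Qed.

Lemma rscale_rscale a b (v : X) : rscale a (rscale b v) = rscale (a * b) v.
Proof. unfold rscale. rewrite vscale_assoc, KofR_mul. reflexivity. Qed.

Lemma rscale_1 (v : X) : rscale 1 v = v.
Proof. unfold rscale. rewrite KofR_1. apply vscale_1. Qed.

Lemma rscale_0 (v : X) : rscale 0 v = vzero X.
Proof.
apply (vadd_cancel (rscale 0 v)).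
rewrite rscale_adds, vadd_0. f_equal. ring.
Qed.

Lemma vadd_rscale0 (u x : X) : vadd X u (rscale 0 x) = u.
Proof. rewrite rscale_0. apply vadd_0. Qed.

Lemma vadd_subK (u x : X) : vadd X (vadd X u (rscale (-1) x)) x = u.
Proof.
rewrite <- vadd_assoc. rewrite <- (rscale_1 x) at 2.
rewrite rscale_adds. replace (-1 + 1) with 0 by ring. apply vadd_rscale0.
Qed.

Lemma vadd_sub_addK (u v x : X) :
  vadd X (vadd X u (rscale (-1) x)) (vadd X v x) = vadd X u v.
Proof.
rewrite vadd_swap. rewrite <- (rscale_1 x) at 2.
rewrite rscale_adds. replace (-1 + 1) with 0 by ring. apply vadd_rscale0.
Qed.

Lemma vopp_rscale (v : X) : vopp X v = rscale (-1) v.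
Proof.
apply (vadd_cancel v). rewrite vadd_opp. rewrite <- (rscale_1 v) at 1.
rewrite rscale_adds. replace (1 + -1) with 0 by ring. rewrite rscale_0. reflexivity.
Qed.

Lemma vsub_rscale (u v : X) : vsub X u v = vadd X u (rscale (-1) v).
Proof. unfold vsub. rewrite vopp_rscale. reflexivity. Qed.

Lemma norm_rscale a (v : X) : norm X (rscale a v) = Rabs a * norm X v.
Proof. unfold rscale. rewrite norm_scale, Kabs_KofR. reflexivity. Qed.

Lemma norm_zero : norm X (vzero X) = 0.
Proof. apply norm_eq0. reflexivity. Qed.

Lemma norm_opp (v : X) : norm X (vopp X v) = norm X v.
Proof.
rewrite vopp_rscale, norm_rscale. replace (Rabs (-1)) with 1 by (rewrite Rabs_left; lra). ring.
Qed.

Lemma norm_ge0 (v : X) : 0 <= norm X v.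
Proof.
pose proof (norm_triangle X v (vopp X v)) as H.
rewrite vadd_opp, norm_zero, norm_opp in H. lra.
Qed.

Lemma norm_normalize (v : X) : 0 < norm X v -> norm X (rscale (/ norm X v) v) = 1.
Proof.
intro Hv. rewrite norm_rscale, Rabs_right.
- field. lra.
- apply Rle_ge, Rlt_le, Rinv_0_lt_compat, Hv.
Qed.

End VectorAlgebra.

(** * Hahn–Banach *)

Definition Klinear {k} (X : NormedSpace k) (phi : X -> K k) : Prop :=
  (forall u v, phi (vadd X u v) = Kadd k (phi u) (phi v)) /\
  (forall a u, phi (vscale X a u) = Kmul k a (phi u)).

Lemma zorn_premaximal (T : Type) (t0 : T) (R : T -> T -> Prop) :
  (forall t, R t t) -> (forall r s t, R r s -> R s t -> R r t) ->
  (forall A : T -> Prop, (forall s t, A s -> A t -> R s t \/ R t s) ->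
     exists t, forall s, A s -> R s t) ->
  exists t, forall s, R t s -> R s t.
Proof.
intros Hrefl Htrans Hchain.
destruct (@classical_sets.ZL_preorder T t0 (fun s t => boolp.asbool (R s t))) as [m Hm].
- intros t. apply boolp.asboolT, Hrefl.
- intros r s t H1 H2. apply boolp.asboolT.
  apply (Htrans r s t); apply boolp.asboolW; assumption.
- intros A HA. destruct (Hchain A) as [m Hm].
  + intros s t As At. destruct (HA s t As At); [left|right]; apply boolp.asboolW; assumption.
  + exists m. intros s As. apply boolp.asboolT, Hm, As.
- exists m. intros s H. apply boolp.asboolW, Hm, boolp.asboolT, H.
Qed.

Section HahnBanach.
Context {k : Kind} (X : NormedSpace k) (z : X).

(* Graph of a real-linear functional defined on a real subspace through [z],
   dominated by the norm and taking the value [norm X z] at [z]. *)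
Definition hb_graph (G : X * R -> Prop) : Prop :=
  (forall u r v s, G (u, r) -> G (v, s) -> G (vadd X u v, r + s)) /\
  (forall a u r, G (u, r) -> G (rscale X a u, a * r)) /\
  (forall u r s, G (u, r) -> G (u, s) -> r = s) /\
  (forall u r, G (u, r) -> r <= norm X u) /\
  (forall a, G (rscale X a z, a * norm X z)).

Definition line_graph (q : X * R) : Prop := exists a, q = (rscale X a z, a * norm X z).

Lemma line_graph_hb : hb_graph line_graph.
Proof.
split; [|split; [|split; [|split]]].
- intros u r v s [a Ea] [b Eb]. injection Ea as -> ->. injection Eb as -> ->.
  exists (a + b). rewrite rscale_adds. f_equal. ring.
- intros s u r [a Ea]. injection Ea as -> ->. exists (s * a). rewrite rscale_rscale. f_equal. ring.
- intros u r s [a Ea] [b Eb]. injection Ea as -> ->. injection Eb as Eu ->.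
  assert (Hz : norm X (rscale X (a + - b) z) = 0).
  { rewrite <- rscale_adds, Eu, rscale_adds. replace (b + - b) with 0 by ring.
    rewrite rscale_0. apply norm_zero. }
  rewrite norm_rscale in Hz. destruct (Rmult_integral _ _ Hz) as [Hab|Hn].
  + pose proof (Rle_abs (a + - b)). pose proof (Rle_abs (- (a + - b))).
    rewrite Rabs_Ropp in *. replace a with b by lra. reflexivity.
  + rewrite Hn. ring.
- intros u r [a Ea]. injection Ea as -> ->. rewrite norm_rscale.
  apply Rmult_le_compat_r; [apply norm_ge0|apply Rle_abs].
- intros a. exists a. reflexivity.
Qed.

Lemma hb_graph_line G q : hb_graph G -> line_graph q -> G q.
Proof. intros (_&_&_&_&Hline) [a ->]. apply Hline. Qed.

Definition graph_extend (G : X * R -> Prop) (x1 : X) (c : R) (q : X * R) : Prop :=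
  exists u r a, G (u, r) /\ q = (vadd X u (rscale X a x1), r + a * c).

(* Any [c] between these two bounds is a dominated value for [x1]. *)
Lemma hb_extension_constant G x1 : hb_graph G -> exists c,
  (forall u r, G (u, r) -> r - norm X (vadd X u (rscale X (-1) x1)) <= c) /\
  (forall v s, G (v, s) -> c <= norm X (vadd X v x1) - s).
Proof.
intros HG. pose proof HG as (Hadd & _ & _ & Hdom & Hline).
set (E := fun q => exists u r, G (u, r) /\ q = r - norm X (vadd X u (rscale X (-1) x1))).
assert (HEb : bound E).
{ exists (norm X x1). intros q (u & r & Hur & ->).
  pose proof (Hdom _ _ Hur).
  pose proof (norm_triangle X (vadd X u (rscale X (-1) x1)) x1) as Htri.
  rewrite vadd_subK in Htri. lra. }
assert (HEn : exists q, E q).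
{ exists (0 * norm X z - norm X (vadd X (rscale X 0 z) (rscale X (-1) x1))).
  exists (rscale X 0 z), (0 * norm X z). auto. }
destruct (completeness E HEb HEn) as [c [Hub Hlub]].
exists c. split.
- intros u r H. apply Hub. exists u, r. auto.
- intros v s H. apply Hlub. intros q (u & r & Hur & ->).
  pose proof (Hdom _ _ (Hadd _ _ _ _ Hur H)) as Huv.
  rewrite <- (vadd_sub_addK X u v x1) in Huv.
  pose proof (norm_triangle X (vadd X u (rscale X (-1) x1)) (vadd X v x1)). lra.
Qed.

Lemma graph_extend_dominated G x1 c : hb_graph G ->
  (forall u r, G (u, r) -> r - norm X (vadd X u (rscale X (-1) x1)) <= c) ->
  (forall v s, G (v, s) -> c <= norm X (vadd X v x1) - s) ->
  forall u r, graph_extend G x1 c (u, r) -> r <= norm X u.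
Proof.
intros (_ & Hsc & _ & Hdom & _) Hlow Hup u r (u1 & r1 & a & H1 & E).
injection E as -> ->.
destruct (Rtotal_order a 0) as [Hneg | [-> | Hpos]].
- set (b := - a).
  pose proof (Hlow _ _ (Hsc (/ b) _ _ H1)) as Hb.
  replace (vadd X u1 (rscale X a x1))
    with (rscale X b (vadd X (rscale X (/ b) u1) (rscale X (-1) x1))).
  + rewrite norm_rscale, Rabs_right by (unfold b; lra).
    apply (Rmult_le_compat_l b) in Hb; [|unfold b; lra].
    replace (b * (/ b * r1 - norm X (vadd X (rscale X (/ b) u1) (rscale X (-1) x1))))
      with (r1 - b * norm X (vadd X (rscale X (/ b) u1) (rscale X (-1) x1)))
      in Hb by (unfold b; field; lra).
    unfold b in *. lra.
  + rewrite rscale_addv, !rscale_rscale.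
    replace (b * / b) with 1 by (unfold b; field; lra).
    rewrite rscale_1. unfold b. do 2 f_equal. ring.
- rewrite vadd_rscale0. pose proof (Hdom _ _ H1). lra.
- pose proof (Hup _ _ (Hsc (/ a) _ _ H1)) as Ha.
  replace (vadd X u1 (rscale X a x1)) with (rscale X a (vadd X (rscale X (/ a) u1) x1)).
  + rewrite norm_rscale, Rabs_right by lra.
    apply (Rmult_le_compat_l a) in Ha; [|lra].
    replace (a * (norm X (vadd X (rscale X (/ a) u1) x1) - / a * r1))
      with (a * norm X (vadd X (rscale X (/ a) u1) x1) - r1) in Ha by (field; lra).
    lra.
  + rewrite rscale_addv, rscale_rscale.
    replace (a * / a) with 1 by (field; lra). rewrite rscale_1. reflexivity.
Qed.

Lemma graph_extend_functional G x1 c : hb_graph G -> ~ (exists r, G (x1, r)) ->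
  forall u r s, graph_extend G x1 c (u, r) -> graph_extend G x1 c (u, s) -> r = s.
Proof.
intros (Hadd & Hsc & Hfun & _ & _) Hx1 u r s (u1 & r1 & a1 & H1 & E1) (u2 & r2 & a2 & H2 & E2).
injection E1 as Eu1 ->. injection E2 as Eu2 ->. rewrite Eu1 in Eu2.
destruct (Req_dec a1 a2) as [<- | Ha].
- apply vadd_cancel_r in Eu2. subst u2. rewrite (Hfun _ _ _ H1 H2). reflexivity.
- (* otherwise [x1] would lie in the domain of [G] *)
  exfalso. apply Hx1.
  exists (/ (a1 - a2) * (r2 + -1 * r1)).
  replace x1 with (rscale X (/ (a1 - a2)) (vadd X u2 (rscale X (-1) u1))).
  { apply Hsc, Hadd; auto. }
  assert (Heq : vadd X (vadd X u1 (rscale X a1 x1)) (vadd X (rscale X (-1) u1) (rscale X (- a2) x1))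
              = vadd X (vadd X u2 (rscale X a2 x1)) (vadd X (rscale X (-1) u1) (rscale X (- a2) x1)))
    by (rewrite Eu2; reflexivity).
  rewrite vadd_swap, (vadd_swap X u2), <- (rscale_1 X u1) in Heq at 1.
  rewrite !rscale_adds, Rplus_opp_r, Rplus_opp_r, rscale_0, vadd_0l, vadd_rscale0 in Heq.
  rewrite <- Heq, rscale_rscale.
  replace (/ (a1 - a2) * (a1 + - a2)) with 1 by (field; lra). apply rscale_1.
Qed.

Lemma hb_graph_extend G x1 : hb_graph G -> ~ (exists r, G (x1, r)) ->
  exists G', hb_graph G' /\ (forall q, G q -> G' q) /\ exists c, G' (x1, c).
Proof.
intros HG Hx1.
destruct (hb_extension_constant G x1 HG) as (c & Hlow & Hup).
pose proof HG as (Hadd & Hsc & _ & _ & Hline).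
exists (graph_extend G x1 c). split; [|split].
- split; [|split; [|split; [|split]]].
  + intros u r v s (u1 & r1 & a1 & H1 & E1) (u2 & r2 & a2 & H2 & E2).
    injection E1 as -> ->. injection E2 as -> ->.
    exists (vadd X u1 u2), (r1 + r2), (a1 + a2). split; [apply Hadd; auto|].
    rewrite vadd_swap, rscale_adds. f_equal. ring.
  + intros a u r (u1 & r1 & a1 & H1 & E1). injection E1 as -> ->.
    exists (rscale X a u1), (a * r1), (a * a1). split; [apply Hsc; auto|].
    rewrite rscale_addv, rscale_rscale. f_equal. ring.
  + exact (graph_extend_functional G x1 c HG Hx1).
  + exact (graph_extend_dominated G x1 c HG Hlow Hup).
  + intros a. exists (rscale X a z), (a * norm X z), 0. split; [apply Hline|].
    rewrite vadd_rscale0. f_equal. ring.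
- intros [u r] H. exists u, r, 0. split; auto. rewrite vadd_rscale0. f_equal. ring.
- exists (0 * norm X z + 1 * c). exists (rscale X 0 z), (0 * norm X z), 1. split; [apply Hline|].
  rewrite rscale_0, vadd_0l, rscale_1. reflexivity.
Qed.

Lemma hb_graph_chain_union (A : (X * R -> Prop) -> Prop) :
  (forall G, A G -> hb_graph G) ->
  (forall G H, A G -> A H -> (forall q, G q -> H q) \/ (forall q, H q -> G q)) ->
  hb_graph (fun q => line_graph q \/ exists G, A G /\ G q).
Proof.
intros HA Hchain.
set (U := fun q => line_graph q \/ exists G, A G /\ G q).
assert (Hsub : forall G, A G -> forall q, G q -> U q) by (intros G AG q Gq; right; eauto).
assert (Htwo : forall q1 q2, U q1 -> U q2 ->
          exists G, hb_graph G /\ G q1 /\ G q2 /\ forall q, G q -> U q).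
{ intros q1 q2 [L1 | (G1 & A1 & G1q)] [L2 | (G2 & A2 & G2q)].
  - exists line_graph. split; [exact line_graph_hb|]. split; [auto|split; [auto|]].
    intros q Lq. left. exact Lq.
  - exists G2. split; [auto|]. split; [apply hb_graph_line; auto|split; [auto|]]. apply Hsub, A2.
  - exists G1. split; [auto|]. split; [auto|split; [apply hb_graph_line; auto|]]. apply Hsub, A1.
  - destruct (Hchain G1 G2 A1 A2) as [H12 | H21].
    + exists G2. split; [auto|]. split; [auto|split; [auto|]]. apply Hsub, A2.
    + exists G1. split; [auto|]. split; [auto|split; [auto|]]. apply Hsub, A1. }
split; [|split; [|split; [|split]]].
- intros u r v s H1 H2. destruct (Htwo _ _ H1 H2) as (G & (Ha & _) & G1 & G2 & GU). auto.
- intros a u r H1. destruct (Htwo _ _ H1 H1) as (G & (_ & Hs & _) & G1 & _ & GU). auto.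
- intros u r s H1 H2. destruct (Htwo _ _ H1 H2) as (G & (_ & _ & Hf & _) & G1 & G2 & _). eauto.
- intros u r H1. destruct (Htwo _ _ H1 H1) as (G & (_ & _ & _ & Hd & _) & G1 & _). auto.
- intros a. left. exists a. reflexivity.
Qed.

Lemma hb_graph_total : exists M, hb_graph M /\ forall x, exists r, M (x, r).
Proof.
set (T := {G : X * R -> Prop | hb_graph G}).
set (le := fun s t : T => forall q, proj1_sig s q -> proj1_sig t q).
destruct (zorn_premaximal T (exist _ line_graph line_graph_hb) le) as [[M HM] Hmax].
- intros t q H. exact H.
- intros r s t H1 H2 q H. apply H2, H1, H.
- intros A HA.
  set (B := fun G => exists s : T, A s /\ proj1_sig s = G).
  assert (HU : hb_graph (fun q => line_graph q \/ exists G, B G /\ G q)).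
  { apply hb_graph_chain_union.
    - intros G ([s Hs] & _ & <-). exact Hs.
    - intros G H (s & As & <-) (t & At & <-). exact (HA s t As At). }
  exists (exist _ _ HU). intros s As q Hq. right. exists (proj1_sig s). split; auto.
  exists s. auto.
- exists M. split; [exact HM|]. intros x. apply Classical_Prop.NNPP. intro Hx.
  destruct (hb_graph_extend M x HM Hx) as (G' & HG' & Hsub & c & Hc).
  apply Hx. exists c. exact (Hmax (exist _ G' HG') Hsub _ Hc).
Qed.

Lemma real_hahn_banach : exists psi : X -> R,
  (forall u v, psi (vadd X u v) = psi u + psi v) /\
  (forall a u, psi (rscale X a u) = a * psi u) /\
  (forall u, psi u <= norm X u) /\ psi z = norm X z.
Proof.
destruct hb_graph_total as (M & (Hadd & Hsc & Hfun & Hdom & Hline) & Htot).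
set (psi := fun x => proj1_sig (boolp.constructive_indefinite_description (Htot x))).
assert (Hpsi : forall x, M (x, psi x)).
{ intros x. unfold psi. destruct (boolp.constructive_indefinite_description (Htot x)). assumption. }
exists psi. split; [|split; [|split]].
- intros u v. apply (Hfun (vadd X u v)); auto.
- intros a u. apply (Hfun (rscale X a u)); auto.
- intros u. apply Hdom, Hpsi.
- apply (Hfun z); auto. pose proof (Hline 1) as H1. rewrite rscale_1, Rmult_1_l in H1. exact H1.
Qed.

End HahnBanach.

Lemma rscale_i_decomp (X : NormedSpace ComplexK) (al be : R) (u : X) :
  vscale X (mkCplx al be) u = vadd X (rscale X al u) (rscale X be (vscale X (mkCplx 0 1) u)).
Proof.
unfold rscale. rewrite vscale_assoc, <- vscale_adds. f_equal.
apply Cplx_ext; simpl; ring.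
Qed.

Lemma hahn_banach {k} (X : NormedSpace k) (z : X) : exists phi : X -> K k,
  Klinear X phi /\ (forall u, Kabs k (phi u) <= norm X u) /\ Kre k (phi z) = norm X z.
Proof.
destruct (real_hahn_banach X z) as (psi & Hadd & Hsc & Hdom & Hz).
destruct k.
- exists psi. split; [split|split].
  + exact Hadd.
  + intros a u. exact (Hsc a u).
  + intros u. simpl. apply Rabs_le. split.
    * pose proof (Hdom (rscale X (-1) u)) as H. rewrite Hsc, norm_rscale in H.
      replace (Rabs (-1)) with 1 in H by (rewrite Rabs_left; lra). lra.
    * apply Hdom.
  + exact Hz.
- (* complexification: [phi u = psi u - i psi (i u)] *)
  set (i := mkCplx 0 1).
  assert (Hd : forall al be u, psi (vscale X (mkCplx al be) u) = al * psi u + be * psi (vscale X i u)).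
  { intros al be u. rewrite rscale_i_decomp, Hadd, !Hsc. reflexivity. }
  exists (fun u => mkCplx (psi u) (- psi (vscale X i u))). split; [split|split].
  + intros u v. apply Cplx_ext; simpl; rewrite ?vscale_addv, !Hadd; ring.
  + intros [al be] u. apply Cplx_ext; simpl.
    * rewrite Hd. ring.
    * rewrite vscale_assoc. simpl.
      rewrite (Hd (0 * al - 1 * be) (0 * be + 1 * al)). fold i. ring.
  + intros u. change (norm2 (psi u) (- psi (vscale X i u)) <= norm X u).
    set (p := psi u). set (q := psi (vscale X i u)). set (m := norm2 p (- q)).
    destruct (Req_dec m 0) as [Hm | Hm].
    * rewrite Hm. apply norm_ge0.
    * (* rotate [u] by the phase of [phi u] *)
      assert (Hmsq : m * m = p * p + q * q) by (unfold m; rewrite norm2_sq; ring).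
      assert (Hunit : Kabs ComplexK (mkCplx (p / m) (q / m)) = 1).
      { change (norm2 (p / m) (q / m) = 1).
        assert (Hsq : p / m * (p / m) + q / m * (q / m) = 1 * 1).
        { replace (p / m * (p / m) + q / m * (q / m)) with ((p * p + q * q) / (m * m)) by (field; auto).
          rewrite <- Hmsq. field. auto. }
        apply Rle_antisym; [apply norm2_le; lra | apply Rle_of_sq; [apply norm2_ge0 | rewrite norm2_sq; lra]]. }
      pose proof (Hdom (vscale X (mkCplx (p / m) (q / m)) u)) as H.
      rewrite Hd, norm_scale, Hunit in H. fold p q in H.
      replace (p / m * p + q / m * q) with m in H; [lra|].
      replace (p / m * p + q / m * q) with ((p * p + q * q) / m) by (field; auto).
      rewrite <- Hmsq. field. auto.
  + exact Hz.
Qed.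

(** * Norms of functionals and rank-one operators *)

Section Functionals.
Context {k : Kind} (X : NormedSpace k).

Definition fnorm_eq (g : X -> K k) (c : R) : Prop :=
  is_lub (fun r => exists u : X, norm X u <= 1 /\ r = Kabs k (g u)) c.

Lemma Klinear_rscale g a u : Klinear X g -> g (rscale X a u) = Kmul k (KofR k a) (g u).
Proof. intros [_ Hs]. apply Hs. Qed.

Lemma Kre_Klinear_add g u v : Klinear X g -> Kre k (g (vadd X u v)) = Kre k (g u) + Kre k (g v).
Proof. intros [Ha _]. rewrite Ha. apply Kre_add. Qed.

Lemma Kre_Klinear_sub g u v : Klinear X g -> Kre k (g (vsub X u v)) = Kre k (g u) - Kre k (g v).
Proof.
intros Hg. rewrite vsub_rscale, Kre_Klinear_add, Klinear_rscale, Kre_mulR by exact Hg. ring.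
Qed.

Lemma Kim_Klinear_sub g u v : Klinear X g -> Kim k (g (vsub X u v)) = Kim k (g u) - Kim k (g v).
Proof.
intros Hg. rewrite vsub_rscale. destruct Hg as [Ha Hs].
rewrite Ha, Kim_add. unfold rscale. rewrite Hs, Kim_mulR. ring.
Qed.

Lemma Klinear_perturb f h t : Klinear X f -> Klinear X h ->
  Klinear X (fun u => Kadd k (f u) (Kmul k (KofR k t) (h u))).
Proof.
intros [fa fs] [ha hs]. split.
- intros u v. rewrite fa, ha. apply toC_inj.
  rewrite !toC_add, !toC_mul, !toC_add. apply Cplx_ext; simpl; ring.
- intros a u. rewrite fs, hs. apply toC_inj.
  rewrite !toC_add, !toC_mul, !toC_add, !toC_mul. apply Cplx_ext; simpl; ring.
Qed.

Lemma Klinear_bound g c : Klinear X g -> 0 <= c ->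
  (forall u, norm X u <= 1 -> Kabs k (g u) <= c) -> forall u, Kabs k (g u) <= c * norm X u.
Proof.
intros Hg Hc Hb u.
pose proof (norm_ge0 X u) as Hn.
destruct (Req_dec (norm X u) 0) as [H0 | H0].
- apply norm_eq0 in H0. subst u.
  rewrite <- (rscale_0 X (vzero X)), Klinear_rscale, Kabs_mul, Kabs_KofR, norm_rscale, Rabs_R0
    by exact Hg.
  lra.
- pose proof (Hb _ (Req_le _ _ (norm_normalize X u ltac:(lra)))) as H.
  rewrite Klinear_rscale, Kabs_mul, Kabs_KofR, Rabs_right in H by
    (exact Hg || apply Rle_ge, Rlt_le, Rinv_0_lt_compat; lra).
  apply (Rmult_le_compat_l (norm X u)) in H; [|lra].
  replace (norm X u * (/ norm X u * Kabs k (g u))) with (Kabs k (g u)) in H by (field; auto).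
  lra.
Qed.

Lemma fnorm_eq_ub g c u : fnorm_eq g c -> norm X u <= 1 -> Kabs k (g u) <= c.
Proof. intros [Hub _] Hu. apply Hub. exists u. auto. Qed.

Lemma fnorm_exists g M : 0 <= M -> (forall u, Kabs k (g u) <= M * norm X u) ->
  exists c, fnorm_eq g c /\ c <= M.
Proof.
intros HM0 HM.
set (S := fun r => exists u : X, norm X u <= 1 /\ r = Kabs k (g u)).
assert (HS : forall r, S r -> r <= M).
{ intros r (u & Hu & ->). pose proof (HM u). nra. }
destruct (completeness S) as [c Hc].
- exists M. exact HS.
- exists (Kabs k (g (vzero X))). exists (vzero X). rewrite norm_zero. split; [lra | reflexivity].
- exists c. split; [exact Hc | apply (proj2 Hc); exact HS].
Qed.

End Functionals.

Lemma rank_one_operator {k} (X Y : NormedSpace k) g c (y1 : Y) :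
  Klinear X g -> 0 < c -> fnorm_eq X g c -> norm Y y1 = 1 ->
  let T := fun u => vscale Y (Kmul k (KofR k (/ c)) (g u)) y1 in
  is_bounded_linear X Y T /\ opnorm_eq X Y T 1 /\
  forall u, norm Y (T u) = / c * Kabs k (g u).
Proof.
intros Hg Hc Hcg Hy1 T.
assert (Hic : 0 < / c) by (apply Rinv_0_lt_compat, Hc).
assert (HT : forall u, norm Y (T u) = / c * Kabs k (g u)).
{ intros u. unfold T. rewrite norm_scale, Kabs_mul, Kabs_KofR, Hy1, Rabs_right by lra. ring. }
assert (Hunit : forall u, norm X u <= 1 -> norm Y (T u) <= 1).
{ intros u Hu. rewrite HT. apply (Rmult_le_reg_l c); [exact Hc|].
  rewrite <- Rmult_assoc, Rinv_r, Rmult_1_l, Rmult_1_r by lra. exact (fnorm_eq_ub X g c u Hcg Hu). }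
destruct Hg as [ga gs].
split; [split; [split|] | split; [split|]].
- intros u v. unfold T. rewrite ga, Kmul_addr. apply vscale_adds.
- intros a u. unfold T. rewrite gs, vscale_assoc, !Kmul_assoc, (Kmul_comm k a). reflexivity.
- exists 1. intros u. rewrite HT.
  pose proof (Klinear_bound X g c (conj ga gs) ltac:(lra) (fun u => fnorm_eq_ub X g c u Hcg) u) as H.
  apply (Rmult_le_compat_l (/ c)) in H; [|lra].
  replace (/ c * (c * norm X u)) with (norm X u) in H by (field; lra). lra.
- intros r (u & Hu & ->). exact (Hunit u Hu).
- intros b Hb. destruct Hcg as [_ Hlub].
  assert (H : c <= c * b).
  { apply Hlub. intros r (u & Hu & ->).
    assert (H1 : norm Y (T u) <= b) by (apply Hb; exists u; auto).
    rewrite HT in H1. apply (Rmult_le_compat_l c) in H1; [|lra].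
    rewrite <- Rmult_assoc, Rinv_r, Rmult_1_l in H1 by lra. exact H1. }
  nra.
- exact HT.
Qed.

(* The uniform sBPBp of the pair [(X, K)], for one fixed pair of constants. *)
Definition functional_sBPB {k} (X : NormedSpace k) (eps eta : R) : Prop :=
  forall g c x0, Klinear X g -> fnorm_eq X g c -> 0 < c ->
    norm X x0 = 1 -> Kabs k (g x0) > c * (1 - eta) ->
    exists x1, norm X x1 = 1 /\ Kabs k (g x1) = c /\ norm X (vsub X x1 x0) < eps.

Lemma functional_sBPB_le {k} (X : NormedSpace k) eps eta eta' :
  0 < eta' <= eta -> functional_sBPB X eps eta -> functional_sBPB X eps eta'.
Proof. intros Heta H g c x0 Hg Hcg Hc Hx0 Hgx0. apply H; auto. nra. Qed.

Lemma uniform_sBPBp_functional {k} (X Y : NormedSpace k) :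
  (exists y : Y, y <> vzero Y) -> uniform_sBPBp X Y ->
  forall eps, 0 < eps -> exists eta, 0 < eta /\ functional_sBPB X eps eta.
Proof.
intros (y0 & Hy0) HP eps Heps.
destruct (HP eps Heps) as (eta & Heta & Hattain).
exists eta. split; [exact Heta|].
intros g c x0 Hg Hcg Hc Hx0 Hgx0.
assert (Hny0 : 0 < norm Y y0).
{ destruct (Rle_lt_or_eq_dec _ _ (norm_ge0 Y y0)) as [Hlt | Heq]; [exact Hlt|].
  symmetry in Heq. apply norm_eq0 in Heq. contradiction. }
destruct (rank_one_operator X Y g c _ Hg Hc Hcg (norm_normalize Y y0 Hny0))
  as (HTlin & HTnorm & HT).
destruct (Hattain _ x0 HTlin HTnorm Hx0) as (x1 & Hx1 & HTx1 & Hclose).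
- rewrite HT. apply (Rmult_lt_reg_l c); [exact Hc|].
  rewrite <- Rmult_assoc, Rinv_r, Rmult_1_l by lra. lra.
- exists x1. split; [exact Hx1|split; [|exact Hclose]].
  rewrite HT in HTx1. apply (Rmult_eq_compat_l c) in HTx1.
  rewrite <- Rmult_assoc, Rinv_r, Rmult_1_l, Rmult_1_r in HTx1 by lra. exact HTx1.
Qed.

(** * Norm attainment of a perturbed functional *)

(* Write [g(w) = p + i q] with modulus [c].  Then
   [c^2 = Re(conj g(w) f(w)) + t Re(conj g(w) h(w)) <= c + t Re(conj g(w) h(w))],
   and [g(w)] lies within [c (d + s)] of the positive real [c], so the last
   real part is at most [c (Re h(y) + 2 d + s)]. *)
Lemma norm2_perturbation_bound (a1 b1 a2 b2 g1 g2 h1 h2 c t d s eta : R) :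
  0 < c -> 0 < t -> 0 <= s ->
  norm2 a1 b1 <= 1 -> norm2 a2 b2 <= 1 ->
  norm2 (a1 + t * a2) (b1 + t * b2) = c ->
  norm2 (a1 + t * a2 - g1) (b1 + t * b2 - g2) <= c * d ->
  norm2 g1 g2 <= c -> c * (1 - eta) <= g1 -> 2 * eta <= s * s ->
  norm2 (a2 - h1) (b2 - h2) <= d ->
  c - 1 <= t * (h1 + 2 * d + s).
Proof.
intros Hc Ht Hs Hf Hh Hgw Hgwy Hgy Hg1 Heta Hhd.
set (p := a1 + t * a2) in *. set (q := b1 + t * b2) in *.
assert (Hpq : p * p + q * q = c * c) by (rewrite <- norm2_sq, Hgw; ring).
assert (Hfw : p * a1 + q * b1 <= c).
{ pose proof (norm2_dot_le p q a1 b1). rewrite Hgw in H. pose proof (norm2_ge0 a1 b1). nra. }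
set (A := p * a2 + q * b2).
assert (HA : c * c - c <= t * A).
{ assert (p * p + q * q = (p * a1 + q * b1) + t * A) by (unfold A, p, q; ring). lra. }
assert (Hgy_near : norm2 (g1 - c) g2 <= c * s).
{ assert (g1 * g1 + g2 * g2 <= c * c) by (rewrite <- norm2_sq; pose proof (norm2_ge0 g1 g2); nra).
  apply norm2_le; nra. }
assert (Hgw_near : norm2 (p - c) q <= c * d + c * s).
{ pose proof (norm2_triangle (p - g1) (q - g2) (g1 - c) g2) as H.
  replace (p - g1 + (g1 - c)) with (p - c) in H by ring.
  replace (q - g2 + g2) with q in H by ring. lra. }
assert (Hdot : (p - c) * a2 + q * b2 <= c * d + c * s).
{ pose proof (norm2_dot_le (p - c) q a2 b2). pose proof (norm2_ge0 (p - c) q).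
  pose proof (norm2_ge0 a2 b2). nra. }
assert (Hre : a2 - h1 <= d) by (pose proof (norm2_ge_fst (a2 - h1) (b2 - h2)); lra).
assert (HA' : A <= c * (h1 + 2 * d + s)).
{ assert (A = (p - c) * a2 + q * b2 + c * (a2 - h1) + c * h1) by (unfold A; ring). nra. }
apply (Rmult_le_reg_l c); [exact Hc|]. nra.
Qed.

Lemma perturbed_fnorm_bound {k} (X : NormedSpace k) f h t c w y d s eta :
  Klinear X f -> Klinear X h -> 0 < t ->
  (forall u, Kabs k (f u) <= norm X u) -> (forall u, Kabs k (h u) <= norm X u) ->
  let g := fun u => Kadd k (f u) (Kmul k (KofR k t) (h u)) in
  fnorm_eq X g c -> 0 < c ->
  norm X w = 1 -> Kabs k (g w) = c -> norm X y = 1 -> c * (1 - eta) <= Kre k (g y) ->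
  norm X (vsub X w y) <= d -> 0 <= s -> 2 * eta <= s * s ->
  c - 1 <= t * (Kre k (h y) + 2 * d + s).
Proof.
intros Hf Hh Ht Hfb Hhb g Hcg Hc Hw Hgw Hy Hgy Hd Hs Heta.
assert (Hg : Klinear X g) by exact (Klinear_perturb X f h t Hf Hh).
assert (Hre : forall u, Kre k (g u) = Kre k (f u) + t * Kre k (h u))
  by (intros u; unfold g; rewrite Kre_add, Kre_mulR; reflexivity).
assert (Him : forall u, Kim k (g u) = Kim k (f u) + t * Kim k (h u))
  by (intros u; unfold g; rewrite Kim_add, Kim_mulR; reflexivity).
assert (Hgwy : Kabs k (g (vsub X w y)) <= c * d).
{ pose proof (Klinear_bound X g c Hg ltac:(lra) (fun u => fnorm_eq_ub X g c u Hcg) (vsub X w y)).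
  nra. }
pose proof (Hhb (vsub X w y)) as Hhwy.
rewrite Kabs_norm2, Kre_Klinear_sub, Kim_Klinear_sub, (Hre w), (Him w) in Hgwy by exact Hg.
rewrite Kabs_norm2, Kre_Klinear_sub, Kim_Klinear_sub in Hhwy by exact Hh.
rewrite Kabs_norm2, Hre, Him in Hgw. rewrite Hd in Hhwy.
apply (norm2_perturbation_bound (Kre k (f w)) (Kim k (f w)) (Kre k (h w)) (Kim k (h w))
         (Kre k (g y)) (Kim k (g y)) _ (Kim k (h y)) c t d s eta); auto.
- rewrite <- Kabs_norm2, <- Hw. apply Hfb.
- rewrite <- Kabs_norm2, <- Hw. apply Hhb.
- rewrite <- Kabs_norm2. apply (fnorm_eq_ub X g c y Hcg). lra.
Qed.

Lemma chord_small_of_functional_sBPB {k} (X : NormedSpace k) e eta :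
  0 < e -> e <= 2 -> 0 < eta -> eta <= e * e / 128 ->
  functional_sBPB X (e / 8) eta ->
  forall x y, norm X x = 1 -> norm X y = 1 ->
    norm X (vadd X x y) / 2 > 1 - eta * e / 32 -> norm X (vsub X x y) < e.
Proof.
intros He He2 Heta Hetae Hattain x y Hx Hy Hmid.
destruct (hahn_banach X (vadd X x y)) as (f & Hf & Hfb & Hfxy).
destruct (hahn_banach X (vsub X x y)) as (h & Hh & Hhb & Hhxy).
set (t := eta / 4).
set (g := fun u => Kadd k (f u) (Kmul k (KofR k t) (h u))).
assert (Hg : Klinear X g) by exact (Klinear_perturb X f h t Hf Hh).
assert (Hre : forall u, Kre k (g u) = Kre k (f u) + t * Kre k (h u))
  by (intros u; unfold g; rewrite Kre_add, Kre_mulR; reflexivity).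
assert (Hgb : forall u, Kabs k (g u) <= (1 + t) * norm X u).
{ intros u. unfold g. eapply Rle_trans; [apply Kabs_triangle|].
  rewrite Kabs_mul, Kabs_KofR, Rabs_right by (unfold t; lra).
  pose proof (Hfb u). pose proof (Hhb u). unfold t in *. nra. }
destruct (fnorm_exists X g (1 + t) ltac:(unfold t; lra) Hgb) as (c & Hcg & Hc1).
assert (Hre_le : forall u, norm X u = 1 -> Kre k (g u) <= c).
{ intros u Hu. pose proof (Kre_le_Kabs k (g u)). pose proof (fnorm_eq_ub X g c u Hcg). lra. }
assert (Hfx : Kre k (f x) <= 1) by (pose proof (Kre_le_Kabs k (f x)); pose proof (Hfb x); lra).
assert (Hfy : Kre k (f y) <= 1) by (pose proof (Kre_le_Kabs k (f y)); pose proof (Hfb y); lra).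
rewrite Kre_Klinear_add in Hfxy by exact Hf.
rewrite Kre_Klinear_sub in Hhxy by exact Hh.
assert (Hhy : -1 <= Kre k (h y)).
{ pose proof (Rabs_Kre_le_Kabs k (h y)). pose proof (Hhb y).
  pose proof (Rle_abs (- Kre k (h y))). rewrite Rabs_Ropp in *. lra. }
assert (Hgy : Kre k (g y) > c * (1 - eta)).
{ rewrite Hre. assert (t * -1 <= t * Kre k (h y)) by (apply Rmult_le_compat_l; unfold t; lra).
  assert (c * (1 - eta) <= (1 + t) * (1 - eta)) by (apply Rmult_le_compat_r; nra).
  unfold t in *. nra. }
assert (Hc : 0 < c) by (pose proof (Hre_le y Hy); nra).
destruct (Hattain g c y Hg Hcg Hc Hy) as (w & Hw & Hgw & Hwy).
{ pose proof (Kre_le_Kabs k (g y)). lra. }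
pose proof (perturbed_fnorm_bound X f h t c w y (norm X (vsub X w y)) (e / 8) eta Hf Hh
              ltac:(unfold t; lra) Hfb Hhb Hcg Hc Hw Hgw Hy (Rlt_le _ _ Hgy) (Rle_refl _)
              ltac:(lra) ltac:(lra)) as Hcup.
pose proof (Hre_le x Hx) as Hcx. rewrite Hre in Hcx.
assert (Hkey : t * norm X (vsub X x y) < t * e) by (unfold t in *; nra).
apply Rmult_lt_reg_l in Hkey; [exact Hkey | unfold t; lra].
Qed.

Theorem mainTheorem7 (k : Kind) (X : BanachSpace k) :
  (exists Y : BanachSpace k, (exists y : Y, y <> vzero Y) /\ uniform_sBPBp X Y) ->
  uniformly_convex X.
Proof.
intros (Y & HY & HP) eps Heps.
set (e := Rmin eps 2).
assert (He : 0 < e) by (apply Rmin_glb_lt; lra).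
assert (Hee : e <= eps) by apply Rmin_l.
assert (He2 : e <= 2) by apply Rmin_r.
destruct (uniform_sBPBp_functional X Y HY HP (e / 8) ltac:(lra)) as (eta0 & Heta0 & Hattain).
set (eta := Rmin eta0 (e * e / 128)).
assert (Heta : 0 < eta) by (apply Rmin_glb_lt; nra).
assert (Heta_e : eta <= e * e / 128) by apply Rmin_r.
exists (eta * e / 32). split; [nra|].
intros x y Hx Hy Hxy. apply Rnot_lt_le. intro Hmid.
assert (Hattain' : functional_sBPB X (e / 8) eta)
  by (apply (functional_sBPB_le X _ eta0); [split; [exact Heta | apply Rmin_l] | exact Hattain]).
pose proof (chord_small_of_functional_sBPB X e eta He He2 Heta Heta_e Hattain' x y Hx Hy ltac:(lra)).
lra.
Qed.
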